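(* Construct matrix $\check{\boldsymbol{\mathcal{A}}} \in \mathbb{R}^{4 s n^2\times 4 s n^2}$ with its $ij$-th $4n^2 \times 4n^2$ block given by $[\check{\boldsymbol{\mathcal{A}}}]_{ij}:= \mathbf{T}(j,i) \cdot \begin{bmatrix} \mathbf{A}_j & \\ & \mathbf{A}_j \end{bmatrix} \otimes \begin{bmatrix} \mathbf{A}_j & \\ & \mathbf{A}_j \end{bmatrix}$. Then, for all $k \in \mathbb{N}$, $\|\check{\boldsymbol{\mathcal{A}}}^k\| \leq \tau \rho^k$.
   Context: Let $\mathbf{A}_1,\dots,\mathbf{A}_s\in\mathbb{R}^{n\times n}$ be the state matrices of an MJS with Markov transition matrix $\mathbf{T}\in\mathbb{R}^{s\times s}$. Define the augmented matrix $\boldsymbol{\mathcal{A}}\in\mathbb{R}^{sn^2\times sn^2}$ with $ij$-th $n^2\times n^2$ block $\mathbf{T}(j,i)\,\mathbf{A}_j\otimes\mathbf{A}_j$. For any $\rho\ge\rho(\boldsymbol{\mathcal{A}})$ (spectral radius), let $\tau:=\sup_{k\in\mathbb{N}}\|\boldsymbol{\mathcal{A}}^k\|/\rho^k$, so that $\|\boldsymbol{\mathcal{A}}^k\|\le\tau\rho^k$ for all $k$. *)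

From HB Require Import structures.
From mathcomp Require Import all_boot all_order all_algebra.
From mathcomp Require Import all_classical all_reals.
From mathcomp Require Import mxtens complex.
Set Implicit Arguments. Unset Strict Implicit. Unset Printing Implicit Defensive.
Import Order.TTheory GRing.Theory Num.Theory.
Local Open Scope ring_scope.
Local Open Scope classical_set_scope.

Section Defs.
Variable R : realType.

Definition vnorm2 m (x : 'cV[R]_m) : R := Num.sqrt (\sum_i x i 0 ^+ 2).

Definition opnorm m p (M : 'M[R]_(m, p)) : R :=
  sup [set vnorm2 (M *m x) | x in [set x : 'cV[R]_p | vnorm2 x <= 1]].

Definition spectral_radius m (M : 'M[R]_m) : R :=
  sup [set ComplexField.Normc.normc z | z in
        [set z : R[i] | root (map_poly (real_complex R) (char_poly M)) z]].

Definition markov_matrix s (T : 'M[R]_s) : Prop :=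
  (forall i j, 0 <= T i j) /\ (forall i, \sum_j T i j = 1).

(* Block matrix in R^{s p x s p} whose ij-th p x p block is T(j,i) * B_j.
   Index k : 'I_(s*p) corresponds to block (k %/ p) and inner index (k %% p). *)
Definition aug_mx s p (T : 'M[R]_s) (B : 'I_s -> 'M[R]_p) : 'M[R]_(s * p) :=
  \matrix_(k, l) (T (mxtens_unindex l).1 (mxtens_unindex k).1
                  * B (mxtens_unindex l).1 (mxtens_unindex k).2 (mxtens_unindex l).2).

Definition calA s n (T : 'M[R]_s) (A : 'I_s -> 'M[R]_n) : 'M[R]_(s * (n * n)) :=
  aug_mx T (fun j => A j *t A j).

Definition diag2 n (M : 'M[R]_n) : 'M[R]_(n + n) := block_mx M 0 0 M.

Definition calA_check s n (T : 'M[R]_s) (A : 'I_s -> 'M[R]_n)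
  : 'M[R]_(s * ((n + n) * (n + n))) :=
  aug_mx T (fun j => diag2 (A j) *t diag2 (A j)).

Definition tau_of s n (T : 'M[R]_s) (A : 'I_s -> 'M[R]_n) (rho : R) : R :=
  sup (range (fun k : nat => opnorm (calA T A ^+ k) / rho ^+ k)).

End Defs.

(* Up to a reindexing, Č is the direct sum of four copies of 𝒜.  Index the
   rows of diag(A_j, A_j) ⊗ diag(A_j, A_j) by (b, a, b', c), where the bits
   b, b' choose a diagonal copy of A_j in each factor: its entries vanish
   unless the bits agree, and are then those of A_j ⊗ A_j.  The coupling
   T(j,i) does not touch the bits, so Č, and hence Č^k, acts on each of the
   four slices x_(b,b') of a vector x as 𝒜, resp. 𝒜^k.  Therefore
   ‖Č^k x‖² = Σ ‖𝒜^k x_(b,b')‖² ≤ ‖𝒜^k‖² ‖x‖², i.e. ‖Č^k‖ ≤ ‖𝒜^k‖ ≤ τ ρ^k. *)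

From HB Require Import structures.
From mathcomp Require Import all_boot all_order all_algebra.
From mathcomp Require Import all_classical all_reals.
From mathcomp Require Import mxtens complex.
From mathcomp Require Import ring zify.
Import Order.TTheory GRing.Theory Num.Theory.
Local Open Scope ring_scope.
Set Implicit Arguments. Unset Strict Implicit.

Section OperatorNorm.
Variable R : realType.
Implicit Types (m p : nat).

Lemma vnorm2_ge0 m (x : 'cV[R]_m) : 0 <= vnorm2 x.
Proof. exact: sqrtr_ge0. Qed.

Lemma vnorm2_sqr m (x : 'cV[R]_m) : vnorm2 x ^+ 2 = \sum_i x i 0 ^+ 2.
Proof. by rewrite sqr_sqrtr // sumr_ge0 // => i _; rewrite sqr_ge0. Qed.

Lemma vnorm2Z m c (x : 'cV[R]_m) : vnorm2 (c *: x) = `|c| * vnorm2 x.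
Proof.
rewrite /vnorm2 -sqrtr_sqr -sqrtrM ?sqr_ge0 // mulr_sumr.
by congr Num.sqrt; apply: eq_bigr => i _; rewrite mxE exprMn.
Qed.

Lemma vnorm2_0 m : vnorm2 (0 : 'cV[R]_m) = 0.
Proof. by rewrite /vnorm2 big1 ?sqrtr0 // => i _; rewrite mxE expr0n. Qed.

Lemma abs_entry_le_vnorm2 m (x : 'cV[R]_m) i : `|x i 0| <= vnorm2 x.
Proof.
rewrite -sqrtr_sqr ler_wsqrtr // (bigD1 i) //= lerDl.
by apply: sumr_ge0 => j _; apply: sqr_ge0.
Qed.

Lemma vnorm2_eq0 m (x : 'cV[R]_m) : vnorm2 x = 0 -> x = 0.
Proof.
move=> x0; apply/matrixP => i j; rewrite ord1 mxE; apply/normr0_eq0/eqP.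
by rewrite eq_le normr_ge0 andbT -x0 abs_entry_le_vnorm2.
Qed.

Lemma opnorm_has_ubound m p (M : 'M[R]_(m, p)) :
  has_ubound [set vnorm2 (M *m x) | x in [set x | vnorm2 x <= 1]].
Proof.
exists (Num.sqrt (\sum_i (\sum_j `|M i j|) ^+ 2)) => _ [x /= x_le1 <-].
apply: ler_wsqrtr; apply: ler_sum => i _.
rewrite -real_normK ?num_real // ler_sqr ?nnegrE ?sumr_ge0 //.
rewrite mxE (le_trans (ler_norm_sum _ _ _)) // ler_sum // => j _.
by rewrite normrM ler_piMr // (le_trans (abs_entry_le_vnorm2 x j)).
Qed.

Lemma opnorm_upper_bound m p (M : 'M[R]_(m, p)) x :
  vnorm2 x <= 1 -> vnorm2 (M *m x) <= opnorm M.
Proof.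
move=> x_le1; apply: sup_upper_bound; last by exists x.
by split; [exists (vnorm2 (M *m x)), x | exact: opnorm_has_ubound].
Qed.

Lemma opnorm_ge0 m p (M : 'M[R]_(m, p)) : 0 <= opnorm M.
Proof.
by rewrite -(vnorm2_0 m) -(mulmx0 _ M) opnorm_upper_bound // vnorm2_0 ler01.
Qed.

Lemma ge_opnorm m p (M : 'M[R]_(m, p)) b :
  (forall x, vnorm2 x <= 1 -> vnorm2 (M *m x) <= b) -> opnorm M <= b.
Proof.
move=> Mb; apply: ge_sup => [|_ [x /= x_le1 <-]]; last exact: Mb.
by exists (vnorm2 (M *m 0)), 0 => //=; rewrite vnorm2_0 ler01.
Qed.

Lemma vnorm2_mulmx_le m p (M : 'M[R]_(m, p)) x :
  vnorm2 (M *m x) <= opnorm M * vnorm2 x.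
Proof.
have [/vnorm2_eq0 ->|x_neq0] := eqVneq (vnorm2 x) 0.
  by rewrite mulmx0 !vnorm2_0 mulr0.
have x_gt0 : 0 < vnorm2 x by rewrite lt_def x_neq0 vnorm2_ge0.
have := opnorm_upper_bound M (x := (vnorm2 x)^-1 *: x).
rewrite -scalemxAr !vnorm2Z ger0_norm ?invr_ge0 ?vnorm2_ge0 // mulVf // lexx.
by rewrite mulrC -ler_pdivrMr // => /(_ isT).
Qed.

End OperatorNorm.

Section Replica.
Variables (R : realType) (Q : finType) (N K : nat) (e : Q * 'I_N -> 'I_K).
Hypothesis e_bij : bijective e.

Definition mx_replicates (C : 'M[R]_K) (M : 'M[R]_N) : Prop :=
  forall q q' u v, C (e (q, u)) (e (q', v)) = (q == q')%:R * M u v.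

Definition cV_slice (x : 'cV[R]_K) (q : Q) : 'cV[R]_N := \col_u x (e (q, u)) 0.

Lemma sum_reindex (F : 'I_K -> R) : \sum_k F k = \sum_q \sum_u F (e (q, u)).
Proof.
rewrite pair_bigA /= (reindex e) /=; last by case: e_bij => f eK fK; exists f.
by apply: eq_bigr => -[].
Qed.

Lemma vnorm2_sqr_slice (x : 'cV[R]_K) :
  vnorm2 x ^+ 2 = \sum_q vnorm2 (cV_slice x q) ^+ 2.
Proof.
rewrite vnorm2_sqr sum_reindex; apply: eq_bigr => q _.
by rewrite vnorm2_sqr; apply: eq_bigr => u _; rewrite mxE.
Qed.

Section SlicedMap.
Variables (P : 'M[R]_K) (P' : 'M[R]_N).
Hypothesis P_sliced : forall x q, cV_slice (P *m x) q = P' *m cV_slice x q.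

Lemma vnorm2_sliced_mulmx_le x : vnorm2 (P *m x) <= opnorm P' * vnorm2 x.
Proof.
rewrite -ler_sqr ?nnegrE ?mulr_ge0 ?vnorm2_ge0 ?opnorm_ge0 //.
rewrite exprMn !vnorm2_sqr_slice mulr_sumr ler_sum // => q _.
rewrite P_sliced -exprMn ler_sqr ?nnegrE ?mulr_ge0 ?vnorm2_ge0 ?opnorm_ge0 //.
exact: vnorm2_mulmx_le.
Qed.

Lemma opnorm_sliced_le : opnorm P <= opnorm P'.
Proof.
apply: ge_opnorm => x x_le1; apply: le_trans (vnorm2_sliced_mulmx_le x) _.
by rewrite ler_piMr ?opnorm_ge0.
Qed.

End SlicedMap.

Variables (C : 'M[R]_K) (M : 'M[R]_N).
Hypothesis CM_rep : mx_replicates C M.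

Lemma cV_slice_mulmx x q : cV_slice (C *m x) q = M *m cV_slice x q.
Proof.
apply/matrixP => u j; rewrite ord1 !mxE sum_reindex (bigD1 q) //=.
rewrite [X in _ + X]big1 ?addr0 => [|q' /negbTE q'_neq].
- by apply: eq_bigr => v _; rewrite CM_rep eqxx mul1r mxE.
- by apply: big1 => v _; rewrite CM_rep eq_sym q'_neq !mul0r.
Qed.

Lemma cV_slice_exp_mulmx k x q : cV_slice (C ^+ k *m x) q = M ^+ k *m cV_slice x q.
Proof.
elim: k x => [|k IHk] x; first by rewrite !expr0 !mul1mx.
by rewrite !exprS -!mulmxE -!mulmxA cV_slice_mulmx IHk.
Qed.

End Replica.

Lemma aug_mxE (R : realType) s p (T : 'M[R]_s) (B : 'I_s -> 'M[R]_p) i a j b :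
  aug_mx T B (mxtens_index (i, a)) (mxtens_index (j, b)) = T j i * B j a b.
Proof. by rewrite mxE !mxtens_indexK. Qed.

Section CheckIndex.
Variables (s n : nat).

Definition dsum_index (b : bool) (a : 'I_n) : 'I_(n + n) :=
  if b then rshift n a else lshift n a.

Lemma dsum_index_inj b b' a a' :
  dsum_index b a = dsum_index b' a' -> (b, a) = (b', a').
Proof.
case: b b' => -[] /eqP;
  by rewrite /= ?eq_lshift ?eq_rshift ?eq_lrshift ?eq_rlshift // => /eqP ->.
Qed.

Lemma diag2_dsumE (R : realType) (X : 'M[R]_n) b b' a a' :
  diag2 X (dsum_index b a) (dsum_index b' a') = (b == b')%:R * X a a'.
Proof.
by case: b b' => -[]; rewrite /diag2 /= ?block_mxEul ?block_mxEur ?block_mxEdl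
  ?block_mxEdr ?mxE ?mul1r ?mul0r.
Qed.

(* The bits (b, b') select one of the four diagonal blocks of
   diag(A_j, A_j) ⊗ diag(A_j, A_j). *)
Definition check_index (p : bool * bool * 'I_(s * (n * n)))
    : 'I_(s * ((n + n) * (n + n))) :=
  let: ((b, b'), u) := p in
  let: (j, ac) := mxtens_unindex u in
  let: (a, c) := mxtens_unindex ac in
  mxtens_index (j, mxtens_index (dsum_index b a, dsum_index b' c)).

Lemma check_indexE b b' j a c :
  check_index ((b, b'), mxtens_index (j, mxtens_index (a, c))) =
  mxtens_index (j, mxtens_index (dsum_index b a, dsum_index b' c)).
Proof. by rewrite /check_index !mxtens_indexK. Qed.

Lemma check_index_bij : bijective check_index.
Proof.
apply: inj_card_bij; last by rewrite !card_prod !card_bool !card_ord; nia.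
move=> [[b1 b2] u] [[b1' b2'] u'].
case: u / mxtens_indexP => j ac; case: ac / mxtens_indexP => a c.
case: u' / mxtens_indexP => j' ac'; case: ac' / mxtens_indexP => a' c'.
have index_inj m p : injective (@mxtens_index m p) := can_inj (@mxtens_indexK m p).
rewrite !check_indexE => /eqP; do 2!rewrite (inj_eq (index_inj _ _)) xpair_eqE.
by case/and3P=> /eqP-> /eqP/dsum_index_inj[-> ->] /eqP/dsum_index_inj[-> ->].
Qed.

Lemma calA_check_replicates (R : realType) (A : 'I_s -> 'M[R]_n) (T : 'M[R]_s) :
  mx_replicates check_index (calA_check T A) (calA T A).
Proof.
move=> [b1 b2] [b1' b2'] u v.
case: u / mxtens_indexP => i ac; case: ac / mxtens_indexP => a c.
case: v / mxtens_indexP => j bd; case: bd / mxtens_indexP => b d.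
rewrite !check_indexE !aug_mxE !tensmxE !diag2_dsumE xpair_eqE -mulnb natrM.
ring.
Qed.

End CheckIndex.

Theorem lemma12 (R : realType) (s n : nat) (A : 'I_s -> 'M[R]_n) (T : 'M[R]_s)
  (rho : R) :
  markov_matrix T ->
  spectral_radius (calA T A) <= rho ->
  (forall k : nat, opnorm (calA T A ^+ k) <= tau_of T A rho * rho ^+ k) ->
  forall k : nat, opnorm (calA_check T A ^+ k) <= tau_of T A rho * rho ^+ k.
Proof.
move=> _ _ calA_bound k; apply: le_trans (calA_bound k).
apply: (opnorm_sliced_le (check_index_bij s n)).
exact: (cV_slice_exp_mulmx (check_index_bij s n) (calA_check_replicates A T)).
Qed.
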